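(* Let $n\geq 0$ and $k\geq 3$ be integers. Then $f_k(n)=n$.
   Context: $\Sigma_k=\{0,1,\ldots,k-1\}$. A border of a word $w$ is a non-empty word that is both a proper prefix and a proper suffix of $w$; $w$ is unbordered if it has no border. A border $u$ of $w$ is non-overlapping if $|u|\le |w|/2$. The smallest BP-factorization of a word $w$ is the factorization $w=w_m\cdots w_1w_0w_1\cdots w_m$ ($m\ge 0$) in which, for each $i\ge 1$, $w_i$ is the longest non-overlapping border of $w_i\cdots w_1w_0w_1\cdots w_i$, and $w_0$ is either empty or unbordered (i.e., one repeatedly removes the longest non-overlapping border from both ends until an empty or unbordered central word remains). Its width is $2m+1$ if $w_0$ is non-empty and $2m$ if $w_0$ is empty. $f_k(n)$ denotes the maximum width of the smallest BP-factorization over all length-$n$ words over $\Sigma_k$. *)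

From mathcomp Require Import all_boot.
Set Implicit Arguments. Unset Strict Implicit. Unset Printing Implicit Defensive.

Section Words.
Variable T : eqType.

Definition is_border (u w : seq T) : bool :=
  [&& 0 < size u, size u < size w,
      prefix u w & suffix u w].

Definition unbordered (w : seq T) : bool :=
  all (fun i => ~~ is_border (take i w) w) (iota 0 (size w)).

Definition is_nonoverlap_border (u w : seq T) : bool :=
  is_border u w && ((size u).*2 <= size w).

Definition lnob_len (w : seq T) : nat :=
  \max_(i <- iota 0 (size w).+1 | is_nonoverlap_border (take i w) w) i.

(* Width of the smallest BP-factorization, computed with fuel:
   remove the longest non-overlapping border from both ends (adding 2 to
   the width) until the central word is empty (add 0) or has no
   non-overlapping border; in the latter case it is non-empty and
   unbordered, contributing 1. *)
Fixpoint bp_width_aux (fuel : nat) (w : seq T) : nat :=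
  match fuel with
  | 0 => 0
  | fuel'.+1 =>
      if size w == 0 then 0
      else let l := lnob_len w in
           if l == 0 then 1
           else (bp_width_aux fuel' (drop l (take (size w - l) w))).+2
  end.

Definition bp_width (w : seq T) : nat := bp_width_aux (size w).+1 w.

End Words.

Definition f (k n : nat) : nat :=
  \max_(w : n.-tuple 'I_k) bp_width (tval w).

From mathcomp Require Import all_boot zify.

Set Implicit Arguments.
Unset Strict Implicit.
Unset Printing Implicit Defensive.

(* Peeling a border never removes fewer letters than it adds to the width, so
   f_k(n) <= n.  For the converse take the palindrome of length n whose letter
   at distance d from the nearer end is n/2 - d (mod 3): its first two letters
   decrease while the first two letters of any suffix of length 2 <= i <= n/2
   increase, so its longest non-overlapping border is a single letter, and
   removing it leaves the palindrome of length n - 2.  The width is thus n. *)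

Section Borders.
Variable T : eqType.
Implicit Types w : seq T.

Lemma nonoverlap_border_takeE w i : i <= size w ->
  is_nonoverlap_border (take i w) w =
  [&& 0 < i, i.*2 <= size w & drop (size w - i) w == take i w].
Proof.
move=> le_i_w; rewrite /is_nonoverlap_border /is_border prefix_take suffixE.
rewrite size_takel //; case: (posnP i) => [-> //| i_gt0] /=.
have [le_2i_w|] := leqP i.*2 (size w); last by rewrite !andbF.
by rewrite andbT (_ : i < size w) //; lia.
Qed.

Lemma lnob_len_le_half w : (lnob_len w).*2 <= size w.
Proof.
suff : lnob_len w <= (size w)./2 by rewrite geq_half_double.
apply/bigmax_leqP_seq => i; rewrite mem_iota add0n ltnS => /andP[_ le_i_w].
by rewrite nonoverlap_border_takeE // => /and3P[_ + _]; rewrite geq_half_double.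
Qed.

Lemma lnob_len_eq w l : l <= size w ->
  is_nonoverlap_border (take l w) w ->
  (forall i, l < i <= size w -> ~~ is_nonoverlap_border (take i w) w) ->
  lnob_len w = l.
Proof.
move=> le_l_w border_l no_longer; apply/eqP; rewrite eqn_leq; apply/andP; split.
  apply/bigmax_leqP_seq => i; rewrite mem_iota add0n ltnS => /andP[_ le_i_w].
  by rewrite leqNgt; apply: contraL => lt_l_i; apply: no_longer; rewrite lt_l_i.
by apply: (bigmaxn_sup_seq l) => //; rewrite mem_iota add0n ltnS.
Qed.

Lemma bp_width_aux_le_size fuel w : bp_width_aux fuel w <= size w.
Proof.
elim: fuel w => [//|fuel IH] w /=.
case: eqP => // /eqP w_nnil; case: eqP => [_|/eqP l_neq0]; first by rewrite lt0n.
have := IH (drop (lnob_len w) (take (size w - lnob_len w) w)).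
rewrite size_drop size_takel ?leq_subr //.
by have := lnob_len_le_half w; lia.
Qed.

Lemma bp_width_aux_peel fuel w : 0 < lnob_len w ->
  bp_width_aux fuel.+1 w =
  (bp_width_aux fuel (drop (lnob_len w) (take (size w - lnob_len w) w))).+2.
Proof.
move=> l_gt0; have w_nnil : size w != 0 by have := lnob_len_le_half w; lia.
by rewrite /= (negbTE w_nnil) (negbTE (lt0n_neq0 l_gt0)).
Qed.

Lemma bp_width_aux_singleton fuel (x : T) : bp_width_aux fuel.+1 [:: x] = 1.
Proof. by have := lnob_len_le_half [:: x]; rewrite /=; case: lnob_len. Qed.

Lemma bp_width_le_size w : bp_width w <= size w.
Proof. exact: bp_width_aux_le_size. Qed.

End Borders.

Section Zigzag.
Variables (k : nat) (k_ge3 : 3 <= k).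

Definition mod3 (x : nat) : 'I_k :=
  Ordinal (leq_trans (ltn_pmod x (isT : 0 < 3)) k_ge3).

Definition zigzag_letter (n p : nat) : nat := (n./2 - minn p (n.-1 - p)) %% 3.

Definition zigzag (n : nat) : seq 'I_k := mkseq (mod3 \o zigzag_letter n) n.

Lemma size_zigzag n : size (zigzag n) = n.
Proof. exact: size_mkseq. Qed.

Lemma nth_zigzag n p x0 : p < n -> val (nth x0 (zigzag n) p) = zigzag_letter n p.
Proof. by move=> lt_p_n; rewrite nth_mkseq //= modn_mod. Qed.

Lemma zigzag_inner n : drop 1 (take (size (zigzag n.+2) - 1) (zigzag n.+2)) = zigzag n.
Proof.
rewrite size_zigzag; apply: (@eq_from_nth _ (mod3 0)) => [|p].
  by rewrite size_drop size_takel ?size_zigzag ?leq_subr //; lia.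
rewrite size_drop size_takel ?size_zigzag // => lt_p_n.
apply: val_inj; rewrite nth_drop nth_take; last lia.
by rewrite !nth_zigzag /zigzag_letter; [congr (_ %% 3)|..]; lia.
Qed.

Lemma lnob_len_zigzag n : lnob_len (zigzag n.+2) = 1.
Proof.
have x0 := mod3 0; set w := zigzag n.+2.
have size_w : size w = n.+2 by rewrite size_zigzag.
have border_1 : is_nonoverlap_border (take 1 w) w.
  rewrite nonoverlap_border_takeE ?size_w //; apply/and3P; split=> //.
  rewrite subSS subn0; apply/eqP.
  apply: (@eq_from_nth _ x0) => [|p]; rewrite size_drop size_w subSnn.
    by rewrite size_takel ?size_w.
  rewrite ltnS leqn0 => /eqP {p}->.
  apply: val_inj; rewrite nth_drop nth_take // addn0 !nth_zigzag //.
  by rewrite /zigzag_letter; congr (_ %% 3); lia.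
apply: lnob_len_eq border_1 _ => [|i /andP[lt1i le_i_w]]; first by rewrite size_w.
rewrite nonoverlap_border_takeE // size_w.
apply/negP => /and3P[_ le_2i_w /eqP border_i].
have equal_at j : j < i ->
    zigzag_letter n.+2 (n.+2 - i + j) = zigzag_letter n.+2 j.
  move=> lt_j_i; have /(congr1 val) := congr1 (fun s => nth x0 s j) border_i.
  by rewrite nth_drop nth_take // !nth_zigzag //; lia.
have := equal_at 0 (ltnW lt1i); have := equal_at 1 lt1i; rewrite /zigzag_letter; lia.
Qed.

Lemma bp_width_aux_zigzag n fuel : n < fuel -> bp_width_aux fuel (zigzag n) = n.
Proof.
elim/ltn_ind: n fuel => -[|[|n]] IH [|fuel] // lt_n_fuel.
- exact: bp_width_aux_singleton.
- rewrite bp_width_aux_peel lnob_len_zigzag // zigzag_inner IH //; lia.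
Qed.

Lemma bp_width_zigzag n : bp_width (zigzag n) = n.
Proof. by rewrite /bp_width bp_width_aux_zigzag // size_zigzag. Qed.

End Zigzag.

Theorem theorem7 (n k : nat) (hk : 3 <= k) : f k n = n.
Proof.
apply/eqP; rewrite eqn_leq; apply/andP; split.
  apply/bigmax_leqP => w _.
  by rewrite -[X in _ <= X](size_tuple w) bp_width_le_size.
have size_w : size (zigzag hk n) == n by rewrite size_zigzag.
rewrite -{1}(bp_width_zigzag hk n).
exact: (leq_bigmax (Tuple size_w)).
Qed.
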